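(* Let $d\geq 1$ and let $\rho,\sigma$ be $d\times d$ density matrices. Then \[ \max_{U\in \mathcal{U}(d)} F(\rho, U\sigma U^\dagger) = F\big(\lambda^\downarrow(\rho),\lambda^\downarrow(\sigma)\big)=\sum_{j=1}^d\sqrt{\lambda^\downarrow_j(\rho)\lambda^\downarrow_j(\sigma)}, \] \[ \min_{U\in \mathcal{U}(d)} F(\rho, U\sigma U^\dagger) = F\big(\lambda^\downarrow(\rho),\lambda^\uparrow(\sigma)\big)=\sum_{j=1}^d\sqrt{\lambda^\downarrow_j(\rho)\lambda^\uparrow_j(\sigma)}. \]
   Context: A density matrix is a positive semidefinite complex matrix of trace one. $\mathcal{U}(d)$ denotes the group of $d\times d$ unitary matrices. The (quantum) fidelity of density matrices $\rho,\sigma$ is $F(\rho,\sigma)=\operatorname{Tr}\sqrt{\sqrt{\rho}\,\sigma\sqrt{\rho}}$. For probability vectors $p=(p_j),q=(q_j)$ the classical fidelity is $F(p,q)=\sum_j\sqrt{p_jq_j}$. For a Hermitian matrix $A$, $\lambda^\downarrow(A)=(\lambda^\downarrow_1(A),\dots,\lambda^\downarrow_d(A))$ is the vector of its eigenvalues (with multiplicity) listed in decreasing order and $\lambda^\uparrow(A)$ the same eigenvalues listed in increasing order. *)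

(* complex numbers are modelled by an arbitrary
   numClosedFieldType C (this includes the complex numbers). *)
From HB Require Import structures.
From mathcomp Require Import all_boot all_order all_algebra.
From Stdlib Require Import ClassicalEpsilon.
Set Implicit Arguments. Unset Strict Implicit. Unset Printing Implicit Defensive.
Import Order.TTheory GRing.Theory Num.Theory.
Local Open Scope ring_scope.
Local Open Scope sesquilinear_scope.

Section Defs.
Variable C : numClosedFieldType.

Definition psdmx n (A : 'M[C]_n) : Prop :=
  A \is hermsymmx /\ forall v : 'cV[C]_n, 0 <= (v ^t* *m A *m v) 0 0.

Definition density n (A : 'M[C]_n) : Prop := psdmx A /\ \tr A = 1.

Definition msqrt n (A : 'M[C]_n) : 'M[C]_n :=
  epsilon (inhabits 0) (fun B : 'M[C]_n => psdmx B /\ B *m B = A).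

Definition fidelity n (rho sigma : 'M[C]_n) : C :=
  \tr (msqrt (msqrt rho *m sigma *m msqrt rho)).

Definition eig_dec n (A : 'M[C]_n) : seq C :=
  epsilon (inhabits [::]) (fun s : seq C =>
    sorted >=%R s /\ char_poly A = \prod_(x <- s) ('X - x%:P)).

Definition eig_inc n (A : 'M[C]_n) : seq C := rev (eig_dec A).

Definition cfidelity (p q : seq C) : C :=
  \sum_(j < size p) sqrtC (p`_j * q`_j).

End Defs.

(* Write rho = X^* diag(lam) X and sigma = Y^* diag(mu) Y.  The fidelity is the
   trace norm, i.e. the sum of the singular values s_i, of a matrix
   L = G diag(sqrt lam) Z diag(sqrt mu) with G, Z unitary.  Pairing L with
   the unitary Z^* G^* shows sum s >= sum_jk sqrt(lam_j mu_k) |Z_jk|^2, a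
   pairing through a doubly stochastic matrix; the polar part of L shows
   sum s <= sum_jk sqrt(lam_j mu_k) W_jk for a doubly substochastic W.  An
   Abel-summation rearrangement inequality bounds both pairings by the
   diagonal and antidiagonal pairings, and aligning the eigenbases (possibly
   after reversing the eigenvalues of sigma) attains both bounds. *)

From HB Require Import structures.
From mathcomp Require Import all_boot all_order all_algebra ring.
From mathcomp Require Import fingroup perm.
From Stdlib Require Import ClassicalEpsilon.
Set Implicit Arguments. Unset Strict Implicit. Unset Printing Implicit Defensive.
Import Order.TTheory GRing.Theory Num.Theory.
Local Open Scope ring_scope.
Local Open Scope sesquilinear_scope.

Section Rearrangement.
Variable R : numDomainType.

Definition kdelta n (j k : 'I_n) : R := (j == k)%:R.

Definition corner n (F : 'I_n -> 'I_n -> R) (p q : nat) : R :=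
  \sum_(j < n) \sum_(k < n) (j <= p)%:R * (k <= q)%:R * F j k.

Lemma abel_expand (a : nat -> R) n j : (j < n)%N -> a n = 0 ->
  a j = \sum_(p < n) (j <= p)%:R * (a p - a p.+1).
Proof.
move=> jn an0.
rewrite -(big_mkord xpredT (fun p => (j <= p)%:R * (a p - a p.+1))).
rewrite (big_cat_nat (n:=j)) ?(ltnW jn) //= big_nat_cond big1; last first.
  by move=> p /andP[/andP[_ pj] _]; rewrite leqNgt pj mul0r.
rewrite add0r big_nat_cond (eq_bigr (fun p => - (a p.+1 - a p))); last first.
  by move=> p /andP[/andP[jp _] _]; rewrite jp mul1r opprB.
by rewrite -big_nat_cond sumrN telescope_sumr ?(ltnW jn) // an0 sub0r opprK.
Qed.

Lemma corner_decomposition (a b : nat -> R) n (F : 'I_n -> 'I_n -> R) :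
  a n = 0 -> b n = 0 ->
  \sum_(j < n) \sum_(k < n) a j * b k * F j k =
  \sum_(p < n) \sum_(q < n) (a p - a p.+1) * (b q - b q.+1) * corner F p q.
Proof.
move=> an bn; rewrite /corner.
transitivity (\sum_(j < n) \sum_(k < n) \sum_(p < n) \sum_(q < n)
    (a p - a p.+1) * (b q - b q.+1) * ((j <= p)%:R * (k <= q)%:R * F j k)).
  apply: eq_bigr => j _; apply: eq_bigr => k _.
  rewrite (abel_expand (ltn_ord j) an) (abel_expand (ltn_ord k) bn).
  rewrite mulr_suml mulr_suml; apply: eq_bigr => p _.
  rewrite mulr_sumr mulr_suml; apply: eq_bigr => q _; ring.
transitivity (\sum_(j < n) \sum_(p < n) \sum_(k < n) \sum_(q < n)
    (a p - a p.+1) * (b q - b q.+1) * ((j <= p)%:R * (k <= q)%:R * F j k)).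
  by apply: eq_bigr => j _; rewrite exchange_big.
rewrite exchange_big /=; apply: eq_bigr => p _.
transitivity (\sum_(j < n) \sum_(q < n) \sum_(k < n)
    (a p - a p.+1) * (b q - b q.+1) * ((j <= p)%:R * (k <= q)%:R * F j k)).
  by apply: eq_bigr => j _; rewrite exchange_big.
rewrite exchange_big /=; apply: eq_bigr => q _.
by rewrite mulr_sumr; apply: eq_bigr => j _; rewrite mulr_sumr.
Qed.

Lemma corner_le_row n (W : 'I_n -> 'I_n -> R) (p q : nat) : (p <= q)%N ->
  (forall j k, 0 <= W j k) -> (forall j, \sum_k W j k <= 1) ->
  corner W p q <= corner (@kdelta n) p q.
Proof.
move=> pq W0 Wr; apply: ler_sum => j _.
have -> : \sum_(k < n) (j <= p)%:R * (k <= q)%:R * kdelta j k = (j <= p)%:R :> R.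
  rewrite (bigD1 j) //= /kdelta eqxx mulr1 big1 ?addr0; last first.
    by move=> k /negPf; rewrite eq_sym => ->; rewrite mulr0.
  by case: (leqP j p) => jp; rewrite ?mul0r // (leq_trans jp pq) mulr1.
case: (leqP j p) => jp; last by rewrite big1 // => k _; rewrite !mul0r.
apply: le_trans (Wr j); apply: ler_sum => k _; rewrite mul1r.
by case: (k <= q)%N; rewrite ?mul1r ?mul0r.
Qed.

Lemma corner_transpose n (F : 'I_n -> 'I_n -> R) p q :
  corner (fun j k => F k j) q p = corner F p q.
Proof.
rewrite /corner exchange_big; apply: eq_bigr => j _; apply: eq_bigr => k _.
by rewrite [_ * (j <= p)%:R]mulrC.
Qed.

(* A doubly substochastic weight puts no more mass on any corner than the
   identity: for p > q apply the row bound to the transposed weight. *)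
Lemma corner_le n (W : 'I_n -> 'I_n -> R) (p q : nat) :
  (forall j k, 0 <= W j k) -> (forall j, \sum_k W j k <= 1) ->
  (forall k, \sum_j W j k <= 1) ->
  corner W p q <= corner (@kdelta n) p q.
Proof.
move=> W0 Wr Wc; case: (leqP p q) => pq; first exact: corner_le_row.
rewrite -corner_transpose -[X in _ <= X]corner_transpose.
have -> : corner (fun j k : 'I_n => kdelta k j) q p = corner (@kdelta n) q p.
  by rewrite /corner; apply: eq_bigr => j _; apply: eq_bigr => k _; rewrite /kdelta eq_sym.
exact: corner_le_row (ltnW pq) (fun j k => W0 k j) Wc.
Qed.

Lemma substochastic_pairing_le (a b : nat -> R) n (W : 'I_n -> 'I_n -> R) :
  (forall i, a i.+1 <= a i) -> (forall i, b i.+1 <= b i) ->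
  a n = 0 -> b n = 0 ->
  (forall j k, 0 <= W j k) -> (forall j, \sum_k W j k <= 1) ->
  (forall k, \sum_j W j k <= 1) ->
  \sum_(j < n) \sum_(k < n) a j * b k * W j k <= \sum_(i < n) a i * b i.
Proof.
move=> da db an bn W0 Wr Wc.
have -> : \sum_(i < n) a i * b i = \sum_(j < n) \sum_(k < n) a j * b k * kdelta j k.
  apply: eq_bigr => i _; rewrite (bigD1 i) //= /kdelta eqxx mulr1 big1 ?addr0 //.
  by move=> k /negPf; rewrite eq_sym => ->; rewrite mulr0.
rewrite !corner_decomposition //; apply: ler_sum => p _; apply: ler_sum => q _.
by apply: ler_wpM2l; [rewrite mulr_ge0 ?subr_ge0 | exact: corner_le].
Qed.

(* Replace b by
   the nonincreasing c k = b 0 - b (n - 1 - k) and W by its column reversal. *)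
Lemma stochastic_pairing_ge (a b : nat -> R) n (W : 'I_n -> 'I_n -> R) :
  (forall i, a i.+1 <= a i) -> (forall i, b i.+1 <= b i) ->
  a n = 0 -> b n = 0 ->
  (forall j k, 0 <= W j k) -> (forall j, \sum_k W j k = 1) ->
  (forall k, \sum_j W j k = 1) ->
  \sum_(i < n) a i * b (n - i.+1)%N <= \sum_(j < n) \sum_(k < n) a j * b k * W j k.
Proof.
move=> da db an bn W0 Wr Wc.
pose c k := if (k < n)%N then b 0%N - b (n - k.+1)%N else 0.
pose W' j k := W j (rev_ord k).
have rev_sum (F : 'I_n -> R) : \sum_k F (rev_ord k) = \sum_k F k.
  by rewrite [RHS](reindex_inj rev_ord_inj).
have dc i : c i.+1 <= c i.
  rewrite /c; case: (ltnP i.+1 n) => h1.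
    by rewrite (ltnW h1) lerD2l lerN2 -(subnSK h1).
  case: (ltnP i n) => h2 //.
  by rewrite (_ : i.+1 = n) ?subnn ?subrr //; apply/eqP; rewrite eqn_leq h1 h2.
have cn : c n = 0 by rewrite /c ltnn.
have Wr' j : \sum_k W' j k <= 1 by rewrite /W' rev_sum Wr.
have Wc' k : \sum_j W' j k <= 1 by rewrite /W' Wc.
have := substochastic_pairing_le da dc an cn (fun j k => W0 _ _) Wr' Wc'.
have -> : \sum_(j < n) \sum_(k < n) a j * c k * W' j k =
    b 0%N * \sum_(j < n) a j - \sum_(j < n) \sum_(k < n) a j * b k * W j k.
  rewrite mulr_sumr -sumrB; apply: eq_bigr => j _.
  rewrite -(rev_sum (fun k => a j * b k * W j k)) -[b 0%N * _](mulr1) -(Wr j).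
  rewrite -(rev_sum (W j)) mulr_sumr -sumrB; apply: eq_bigr => k _.
  by rewrite /c /W' ltn_ord; ring.
have -> : \sum_(i < n) a i * c i =
    b 0%N * \sum_(i < n) a i - \sum_(i < n) a i * b (n - i.+1)%N.
  by rewrite mulr_sumr -sumrB; apply: eq_bigr => i _; rewrite /c ltn_ord; ring.
by rewrite lerD2l lerN2.
Qed.

End Rearrangement.

Section Spectral.
Variable C : numClosedFieldType.

Lemma adjmxM m n p (A : 'M[C]_(m, n)) (B : 'M[C]_(n, p)) :
  (A *m B) ^t* = B ^t* *m A ^t*.
Proof. by rewrite trmx_mul map_mxM. Qed.

Lemma adjmxZ m n (x : C) (A : 'M[C]_(m, n)) : (x *: A) ^t* = x^* *: A ^t*.
Proof. by rewrite linearZ /= map_mxZ. Qed.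

Lemma unitarymx_tV n (P : 'M[C]_n) : P \is unitarymx -> P ^t* *m P = 1%:M.
Proof. by move=> Pu; have := mulmxKtV (1%:M : 'M[C]_n) Pu erefl; rewrite mul1mx. Qed.

Lemma hermitian_adj n (A : 'M[C]_n) : A \is hermsymmx -> A ^t* = A.
Proof. by move=> /is_hermitianmxP; rewrite expr0 scale1r => <-. Qed.

Lemma diag_mxM n (x y : 'rV[C]_n) :
  diag_mx x *m diag_mx y = diag_mx (\row_i (x 0 i * y 0 i)).
Proof.
apply/matrixP => i j; rewrite mul_diag_mx !mxE.
by case: (i =P j) => [->|_]; rewrite ?mulr1n ?mulr0n ?mulr0.
Qed.

Lemma adj_diag_mx n (x : 'rV[C]_n) : x \is a realmx -> (diag_mx x) ^t* = diag_mx x.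
Proof.
move=> xr; rewrite tr_diag_mx map_diag_mx; congr diag_mx.
by apply/rowP => i; rewrite !mxE; apply/CrealP/(mxOverP xr).
Qed.

Lemma nneg_realmx n (x : 'rV[C]_n) : (forall i, 0 <= x 0 i) -> x \is a realmx.
Proof. by move=> x0; apply/mxOverP => i j; rewrite ord1; apply: ger0_real. Qed.

Definition spectral_decomp n (A P : 'M[C]_n) (s : 'rV[C]_n) :=
  [/\ P \is unitarymx, forall i, 0 <= s 0 i & A = P ^t* *m diag_mx s *m P].

Lemma hermitian_spectral n (A : 'M[C]_n) : A \is hermsymmx ->
  exists (P : 'M[C]_n) (s : 'rV[C]_n),
    [/\ P \is unitarymx, s \is a realmx & A = P ^t* *m diag_mx s *m P].
Proof.
move=> Ah; exists (spectralmx A), (spectral_diag A); split.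
- exact: spectral_unitarymx.
- exact: hermitian_spectral_diag_real.
- rewrite -(invmx_unitary (spectral_unitarymx A)).
  exact/orthomx_spectralP/hermitian_normalmx.
Qed.

Lemma spectral_quadratic n (P : 'M[C]_n) (s : 'rV[C]_n) (v : 'cV[C]_n) :
  (v ^t* *m (P ^t* *m diag_mx s *m P) *m v) 0 0 =
  \sum_i s 0 i * ((P *m v) i 0)^* * (P *m v) i 0.
Proof.
rewrite !mulmxA -adjmxM -!mulmxA mxE; apply: eq_bigr => i _.
rewrite mul_diag_mx !mxE; ring.
Qed.

(* P maps P^* e_i back to e_i, so P^* e_i is an eigenvector of
   P^* diag(s) P for the eigenvalue s_i. *)
Lemma unitary_delta n (P : 'M[C]_n) i : P \is unitarymx ->
  P *m (P ^t* *m delta_mx i (0 : 'I_1)) = delta_mx i 0.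
Proof. by move=> Pu; rewrite mulmxA (unitarymxP Pu) mul1mx. Qed.

Lemma diag_mx_delta n (x : 'rV[C]_n) i :
  diag_mx x *m delta_mx i (0 : 'I_1) = x 0 i *: delta_mx i 0.
Proof.
apply/matrixP => k j; rewrite mul_diag_mx !mxE.
by case: (k =P i) => [->|_]; rewrite ?mulr1 ?mulr0 //= andbF mulr0.
Qed.

(* Positive semidefinite matrices are exactly those with a spectral
   decomposition: the eigenvalues are the values of the form on eigenvectors. *)
Lemma psd_spectral n (A : 'M[C]_n) : psdmx A -> exists P s, spectral_decomp A P s.
Proof.
move=> [Ah Aq]; have [P [s [Pu sr AE]]] := hermitian_spectral Ah.
exists P, s; split => // i.
have := Aq (P ^t* *m delta_mx i 0).
rewrite AE spectral_quadratic unitary_delta // (bigD1 i) //= big1 ?addr0; last first.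
  by move=> j /negPf ji; rewrite !mxE ji /= mulr0.
by rewrite !mxE !eqxx /= conjC1 !mulr1.
Qed.

Lemma spectral_psd n (P : 'M[C]_n) (s : 'rV[C]_n) :
  P \is unitarymx -> (forall i, 0 <= s 0 i) -> psdmx (P ^t* *m diag_mx s *m P).
Proof.
move=> Pu s0; split.
  apply/is_hermitianmxP; rewrite expr0 scale1r !adjmxM trmxCK.
  by rewrite adj_diag_mx ?nneg_realmx // mulmxA.
move=> v; rewrite spectral_quadratic; apply: sumr_ge0 => i _.
by rewrite -mulrA mulr_ge0 // mulrC mul_conjC_ge0.
Qed.

Lemma psd_gram m n (K : 'M[C]_(m, n)) : psdmx (K *m K ^t*).
Proof.
split; first by apply/is_hermitianmxP; rewrite expr0 scale1r adjmxM trmxCK.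
move=> v; have -> : v ^t* *m (K *m K ^t*) *m v = (K ^t* *m v) ^t* *m (K ^t* *m v).
  by rewrite adjmxM trmxCK !mulmxA.
by rewrite mxE; apply: sumr_ge0 => k _; rewrite !mxE mulrC mul_conjC_ge0.
Qed.

Lemma psd_form_eq0 n (B : 'M[C]_n) (v : 'cV[C]_n) : psdmx B ->
  (v ^t* *m B *m v) 0 0 = 0 -> B *m v = 0.
Proof.
move=> /psd_spectral [P [s [Pu s0 BE]]]; rewrite BE spectral_quadratic => /eqP.
rewrite psumr_eq0; last by move=> i _; rewrite -mulrA mulr_ge0 // mulrC mul_conjC_ge0.
move=> /allP H; rewrite -!mulmxA.
suff -> : diag_mx s *m (P *m v) = 0 by rewrite !mulmx0.
apply/matrixP => i j; rewrite ord1 mul_diag_mx [LHS]mxE [RHS]mxE.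
have := H i (mem_index_enum _).
rewrite -mulrA mulf_eq0 => /orP[/eqP->|]; first by rewrite mul0r.
by rewrite mulrC mul_conjC_eq0 => /eqP ->; rewrite mulr0.
Qed.

(* If two PSD matrices have the same square, every eigenvalue x of their
   (Hermitian) difference vanishes: with v an eigenvector,
   0 = v^*(B^2 - T^2)v = x (v^* B v + v^* T v), and if the bracket vanishes
   then B v = T v = 0, whence x v = (B - T) v = 0. *)
Lemma psd_same_square_eigen n (B T : 'M[C]_n) (v : 'cV[C]_n) (x : C) :
  psdmx B -> psdmx T -> B *m B = T *m T -> x^* = x -> v != 0 ->
  (B - T) *m v = x *: v -> v ^t* *m (B - T) = x *: v ^t* -> x = 0.
Proof.
move=> Bp Tp BT xr vn0 Xv vX.
have E : B *m B - T *m T = B *m (B - T) + (B - T) *m T.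
  by rewrite mulmxBr mulmxBl addrA subrK.
have E0 : v ^t* *m (B *m B - T *m T) *m v = 0 by rewrite BT subrr mulmx0 mul0mx.
have t1 : v ^t* *m (B *m (B - T)) *m v = x *: (v ^t* *m B *m v).
  by rewrite -!mulmxA Xv -!scalemxAr.
have t2 : v ^t* *m ((B - T) *m T) *m v = x *: (v ^t* *m T *m v).
  by rewrite !mulmxA vX -!scalemxAl.
move: E0; rewrite E mulmxDr mulmxDl t1 t2 -scalerDr.
have qB := (proj2 Bp) v; have qT := (proj2 Tp) v.
move=> /matrixP/(_ 0 0); rewrite [LHS]mxE [X in _ * X]mxE [RHS]mxE.
move=> /eqP; rewrite mulf_eq0 => /orP[/eqP//|]; rewrite paddr_eq0 //.
move=> /andP[/eqP /(psd_form_eq0 Bp) Bv /eqP /(psd_form_eq0 Tp) Tv].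
move: Xv; rewrite mulmxBl Bv Tv subrr => /esym/eqP.
by rewrite scaler_eq0 (negPf vn0) orbF => /eqP.
Qed.

Lemma psd_sqrt_unique n (B T : 'M[C]_n) :
  psdmx B -> psdmx T -> B *m B = T *m T -> B = T.
Proof.
move=> Bp Tp BT; have Xh : B - T \is hermsymmx.
  apply/is_hermitianmxP; rewrite expr0 scale1r linearB /= map_mxB.
  by rewrite !hermitian_adj //; [case: Tp | case: Bp].
have [Q [x [Qu xr XE]]] := hermitian_spectral Xh.
suff x0 : x = 0.
  by apply/eqP; rewrite -subr_eq0 XE x0 linear0 mulmx0 mul0mx.
apply/rowP => i; rewrite mxE.
set v := Q ^t* *m delta_mx i (0 : 'I_1).
have xi_r : (x 0 i)^* = x 0 i by apply/CrealP/(mxOverP xr).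
have Xv : (B - T) *m v = x 0 i *: v.
  by rewrite XE -mulmxA unitary_delta // -mulmxA diag_mx_delta scalemxAr.
apply: (psd_same_square_eigen Bp Tp BT xi_r _ Xv).
  apply/eqP => v0; have := unitary_delta i Qu; rewrite -/v v0 mulmx0.
  by move/matrixP/(_ i 0); rewrite !mxE !eqxx => /eqP; rewrite eq_sym oner_eq0.
by rewrite -[B - T](hermitian_adj Xh) -adjmxM Xv adjmxZ xi_r.
Qed.

Definition sqrt_row n (s : 'rV[C]_n) := \row_i sqrtC (s 0 i).

Lemma sqrt_row_ge0 n (s : 'rV[C]_n) i : 0 <= s 0 i -> 0 <= sqrt_row s 0 i.
Proof. by rewrite mxE sqrtC_ge0. Qed.

Lemma spectral_sq n (P : 'M[C]_n) (s : 'rV[C]_n) : P \is unitarymx ->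
  P ^t* *m diag_mx s *m P *m (P ^t* *m diag_mx s *m P) =
  P ^t* *m diag_mx (\row_i (s 0 i * s 0 i)) *m P.
Proof.
move=> Pu; rewrite -!mulmxA; congr (_ *m _).
by rewrite [P *m _]mulmxA (unitarymxP Pu) mul1mx mulmxA diag_mxM.
Qed.

Lemma msqrt_spectral n (A P : 'M[C]_n) (s : 'rV[C]_n) : spectral_decomp A P s ->
  msqrt A = P ^t* *m diag_mx (sqrt_row s) *m P.
Proof.
move=> [Pu s0 AE]; set T := P ^t* *m diag_mx (sqrt_row s) *m P.
have Tp : psdmx T by apply: spectral_psd => // i; apply: sqrt_row_ge0.
have TT : T *m T = A.
  rewrite spectral_sq // AE; congr (_ *m _ *m _); congr diag_mx.
  by apply/rowP => i; rewrite !mxE -expr2 sqrtCK.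
have [Bp BB] := epsilon_spec (inhabits 0)
  (fun B : 'M[C]_n => psdmx B /\ B *m B = A) (ex_intro _ T (conj Tp TT)).
by apply: psd_sqrt_unique => //; rewrite BB TT.
Qed.

Lemma msqrt_decomp n (A P : 'M[C]_n) (s : 'rV[C]_n) : spectral_decomp A P s ->
  spectral_decomp (msqrt A) P (sqrt_row s).
Proof.
by move=> sA; rewrite (msqrt_spectral sA); case: sA => Pu s0 _; split => // i;
  apply: sqrt_row_ge0.
Qed.

Lemma spectral_adj n (A P : 'M[C]_n) (s : 'rV[C]_n) : spectral_decomp A P s ->
  A ^t* = A.
Proof.
move=> [Pu s0 ->]; rewrite !adjmxM trmxCK adj_diag_mx ?mulmxA //.
exact: nneg_realmx.
Qed.

Lemma spectral_trace n (A P : 'M[C]_n) (s : 'rV[C]_n) : spectral_decomp A P s ->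
  \tr A = \sum_i s 0 i.
Proof.
by move=> [Pu s0 ->]; rewrite mxtrace_mulC mulmxA (unitarymxP Pu) mul1mx mxtrace_diag.
Qed.

End Spectral.

Section SortedSpectrum.
Variable C : numClosedFieldType.

Definition rowseq n (s : 'rV[C]_n) : seq C := [seq s 0 i | i <- enum 'I_n].

Lemma rowseq_nth n (s : 'rV[C]_n) (i : 'I_n) : (rowseq s)`_i = s 0 i.
Proof. by rewrite /rowseq (nth_map i) ?size_enum_ord // nth_ord_enum. Qed.

Lemma size_rowseq n (s : 'rV[C]_n) : size (rowseq s) = n.
Proof. by rewrite size_map size_enum_ord. Qed.

Definition nonincreasing n (s : 'rV[C]_n) :=
  forall i j : 'I_n, (i <= j)%N -> s 0 j <= s 0 i.

Definition sorted_spectral n (A P : 'M[C]_n) (s : 'rV[C]_n) :=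
  spectral_decomp A P s /\ nonincreasing s.

Lemma perm_unitarymx n (p : 'S_n) : (perm_mx p : 'M[C]_n) \is unitarymx.
Proof.
by apply/unitarymxP; rewrite tr_perm_mx map_perm_mx -perm_mxM mulgV perm_mx1.
Qed.

Lemma perm_mx_conj_diag n (p : 'S_n) (s : 'rV[C]_n) :
  perm_mx p *m diag_mx s *m (perm_mx p) ^t* = diag_mx (\row_i s 0 (p i)).
Proof.
rewrite tr_perm_mx map_perm_mx -row_permE -[in perm_mx p^-1](invgK p) -col_permE.
apply/matrixP => i j; rewrite !mxE invgK (inj_eq perm_inj).
by case: (i =P j) => [->|]; rewrite ?mulr1n ?mulr0n.
Qed.

Lemma spectral_perm n (A P : 'M[C]_n) (s : 'rV[C]_n) (p : 'S_n) :
  spectral_decomp A P s -> spectral_decomp A (perm_mx p *m P) (\row_i s 0 (p i)).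
Proof.
move=> [Pu s0 AE]; split.
- exact: mul_unitarymx (perm_unitarymx p) Pu.
- by move=> i; rewrite mxE.
rewrite -perm_mx_conj_diag adjmxM AE !mulmxA; congr (_ *m _).
rewrite -!mulmxA; congr (_ *m _); rewrite !mulmxA.
rewrite (unitarymx_tV (perm_unitarymx p)) mul1mx -mulmxA.
by rewrite (unitarymx_tV (perm_unitarymx p)) mulmx1.
Qed.

(* Sorting the eigenvalues: order them by decreasing real part, which is a
   total order extending the order on the (real, nonnegative) eigenvalues. *)
Lemma spectral_sort n (A P : 'M[C]_n) (s : 'rV[C]_n) : spectral_decomp A P s ->
  exists P' (s' : 'rV[C]_n), sorted_spectral A P' s'.
Proof.
move=> sA; pose rle (x y : C) := 'Re y <= 'Re x.
have rtot : total rle by move=> x y; rewrite /rle orbC real_leVge ?Creal_Re.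
have rtr : transitive rle by move=> x y z h1 h2; apply: le_trans h2 h1.
set t := [tuple s 0 i | i < n].
have /tuple_permP [p pE] : perm_eq (sort rle t) t by rewrite perm_sort.
exists (perm_mx p *m P), (\row_i s 0 (p i)); split; first exact: spectral_perm.
move=> i j ij; rewrite !mxE.
have := sorted_leq_nth rtr (fun x => lexx _) 0 (sort_sorted rtot t).
rewrite size_sort size_tuple => /(_ i j (ltn_ord i) (ltn_ord j) ij).
rewrite pE !nth_mktuple !tnth_mktuple; case: sA => _ s0 _.
by rewrite /rle !(Creal_ReP _ (ger0_real (s0 _))).
Qed.

Lemma psd_sorted_spectral n (A : 'M[C]_n) : psdmx A ->
  exists P (s : 'rV[C]_n), sorted_spectral A P s.
Proof. by move=> /psd_spectral [P [s /spectral_sort]]. Qed.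

Lemma char_poly_similar n (Q P D : 'M[C]_n) : Q *m P = 1%:M ->
  char_poly (Q *m D *m P) = char_poly D.
Proof.
move=> QP; rewrite /char_poly /char_poly_mx.
have XE : ('X%:M : 'M[{poly C}]_n) = map_mx polyC Q *m 'X%:M *m map_mx polyC P.
  by rewrite mul_mx_scalar -scalemxAl -map_mxM QP map_mx1 scalemx1.
rewrite [X in X - _]XE !map_mxM -mulmxBl -mulmxBr !det_mulmx mulrC mulrA.
by rewrite [X in X * _]mulrC -det_mulmx -map_mxM QP map_mx1 det1 mul1r.
Qed.

(* eig_dec reads off the eigenvalues of a sorted spectral decomposition:
   both are sorted lists of the roots of the characteristic polynomial. *)
Lemma eig_dec_sorted_spectral n (A P : 'M[C]_n) (s : 'rV[C]_n) :
  sorted_spectral A P s -> eig_dec A = rowseq s.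
Proof.
move=> [[Pu s0 AE] sdec].
have hc : char_poly A = \prod_(x <- rowseq s) ('X - x%:P).
  rewrite AE char_poly_similar ?unitarymx_tV // char_poly_trig ?diag_mx_is_trig //.
  by rewrite big_map big_enum /=; apply: eq_bigr => i _; rewrite mxE eqxx mulr1n.
have hs : sorted >=%R (rowseq s).
  rewrite /rowseq sorted_map.
  have : sorted (relpre val ltn) (enum 'I_n).
    by rewrite -sorted_map val_enum_ord iota_ltn_sorted.
  by apply: sub_sorted => i j /= ij; apply: sdec (ltnW ij).
have [es ec] := epsilon_spec (inhabits [::]) (fun e : seq C =>
    sorted >=%R e /\ char_poly A = \prod_(x <- e) ('X - x%:P))
  (ex_intro _ (rowseq s) (conj hs hc)).
apply: sorted_eq es hs _.
- by move=> y x z /= h1 h2; apply: le_trans h2 h1.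
- by move=> x y /= /andP[h1 h2]; apply/le_anti; rewrite h1 h2.
- by apply: prod_XsubC_eq; rewrite -ec -hc.
Qed.

End SortedSpectrum.

Section SingularValues.
Variable C : numClosedFieldType.

Lemma amgm (u v s : C) : 0 <= u -> 0 <= v -> 0 <= s ->
  s * (2%:R * (u * v)) <= u ^+ 2 + s ^+ 2 * v ^+ 2.
Proof.
move=> u0 v0 s0; have : 0 <= (u - s * v) ^+ 2.
  by rewrite real_exprn_even_ge0 // rpredB ?ger0_real ?mulr_ge0.
have -> : (u - s * v) ^+ 2 = u ^+ 2 + s ^+ 2 * v ^+ 2 - s * (2%:R * (u * v)) by ring.
by rewrite subr_ge0.
Qed.

Lemma cauchy_schwarz_le n (x y : 'I_n -> C) (s : C) : 0 <= s ->
  \sum_k `|x k| ^+ 2 = s ^+ 2 -> \sum_k `|y k| ^+ 2 <= 1 ->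
  \sum_k `|x k| * `|y k| <= s.
Proof.
move=> s0 hx hy; have [sz|snz] := eqVneq s 0.
  move: hx; rewrite sz expr0n /= => /eqP; rewrite psumr_eq0 => [/allP hx|k _]; last first.
    exact: exprn_ge0.
  rewrite big1 // => k _; have := hx k (mem_index_enum _).
  by rewrite expf_eq0 /= => /eqP ->; rewrite mul0r.
have sp : 0 < s by rewrite lt_def snz s0.
have two0 : 0 < 2%:R :> C by rewrite ltr0n.
rewrite -(ler_pM2l sp) -(ler_pM2l two0) mulrCA !mulr_sumr.
apply: (@le_trans _ _ (\sum_k (`|x k| ^+ 2 + s ^+ 2 * `|y k| ^+ 2))).
  by apply: ler_sum => k _; apply: amgm.
rewrite big_split /= hx -mulr_sumr.
have h : s ^+ 2 * \sum_k `|y k| ^+ 2 <= s ^+ 2 by rewrite ler_piMr // exprn_ge0.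
by apply: le_trans (lerD (lexx _) h) _; rewrite -expr2 -mulr2n mulr_natl.
Qed.

Lemma gram_diag m n (M : 'M[C]_(m, n)) i : (M *m M ^t*) i i = \sum_k `|M i k| ^+ 2.
Proof. by rewrite mxE; apply: eq_bigr => k _; rewrite !mxE normCK. Qed.

Lemma adj_gram_diag m n (M : 'M[C]_(m, n)) j : (M ^t* *m M) j j = \sum_k `|M k j| ^+ 2.
Proof. by rewrite mxE; apply: eq_bigr => k _; rewrite !mxE normCK mulrC. Qed.

Lemma unitary_row_norm n (M : 'M[C]_n) i : M \is unitarymx ->
  \sum_k `|M i k| ^+ 2 = 1.
Proof. by move=> Mu; rewrite -gram_diag (unitarymxP Mu) mxE eqxx. Qed.

Lemma unitary_col_norm n (M : 'M[C]_n) j : M \is unitarymx ->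
  \sum_k `|M k j| ^+ 2 = 1.
Proof. by move=> Mu; rewrite -adj_gram_diag (unitarymx_tV Mu) mxE eqxx. Qed.

(* L has pairwise orthogonal rows, of lengths s_i >= 0; then the s_i are the
   singular values of L, and their sum is the trace norm of L. *)
Definition orthogonal_rows n (L : 'M[C]_n) (s : 'rV[C]_n) :=
  (forall i, 0 <= s 0 i) /\ L *m L ^t* = diag_mx (\row_i (s 0 i * s 0 i)).

Lemma trace_orthogonal_rows_le n (L Q : 'M[C]_n) (s : 'rV[C]_n) :
  orthogonal_rows L s -> (forall i, \sum_k `|Q k i| ^+ 2 <= 1) ->
  `|\tr (L *m Q)| <= \sum_i s 0 i.
Proof.
move=> [s0 LL] Qc; rewrite /mxtrace; apply: le_trans (ler_norm_sum _ _ _) _.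
apply: ler_sum => i _; rewrite mxE; apply: le_trans (ler_norm_sum _ _ _) _.
under eq_bigr do rewrite normrM.
by apply: cauchy_schwarz_le => //; rewrite -gram_diag LL !mxE eqxx mulr1n expr2.
Qed.

Lemma trace_diag_sandwich n (G Z N : 'M[C]_n) (a b : 'rV[C]_n) :
  \tr (G *m diag_mx a *m Z *m diag_mx b *m N) =
  \sum_j \sum_k a 0 j * b 0 k * (Z j k * (N *m G) k j).
Proof.
rewrite -!mulmxA mxtrace_mulC -!mulmxA /mxtrace; apply: eq_bigr => j _.
rewrite mul_diag_mx mxE mxE mulr_sumr; apply: eq_bigr => k _.
by rewrite mul_diag_mx !mxE; ring.
Qed.

(* Lower bound: for L = G diag(a) Z diag(b) with G, Z unitary and a, b >= 0,
   the doubly stochastic pairing of a and b through |Z_jk|^2 is at most the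
   trace norm of L, paired with the unitary Z^* G^*. *)
Lemma singular_sum_ge n (G Z : 'M[C]_n) (a b s : 'rV[C]_n) :
  G \is unitarymx -> Z \is unitarymx ->
  (forall i, 0 <= a 0 i) -> (forall i, 0 <= b 0 i) ->
  orthogonal_rows (G *m diag_mx a *m Z *m diag_mx b) s ->
  \sum_j \sum_k a 0 j * b 0 k * `|Z j k| ^+ 2 <= \sum_i s 0 i.
Proof.
move=> Gu Zu a0 b0 Ls.
have Qu : Z ^t* *m G ^t* \is unitarymx by rewrite mul_unitarymx ?trmxC_unitary.
have hT : \tr (G *m diag_mx a *m Z *m diag_mx b *m (Z ^t* *m G ^t*)) =
    \sum_j \sum_k a 0 j * b 0 k * `|Z j k| ^+ 2.
  rewrite trace_diag_sandwich -mulmxA (unitarymx_tV Gu) mulmx1.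
  by apply: eq_bigr => j _; apply: eq_bigr => k _; rewrite !mxE normCK mulrC.
have T0 : 0 <= \sum_j \sum_k a 0 j * b 0 k * `|Z j k| ^+ 2.
  by apply: sumr_ge0 => j _; apply: sumr_ge0 => k _; rewrite !mulr_ge0 ?exprn_ge0.
rewrite -(ger0_norm T0) -hT; apply: trace_orthogonal_rows_le Ls _ => i.
by rewrite unitary_col_norm.
Qed.

(* The diagonal entries of an orthogonal projector lie below 1, since
   E_kk = sum_l |E_kl|^2 >= E_kk^2. *)
Lemma projector_diag_le1 n (E : 'M[C]_n) k :
  E ^t* = E -> E *m E = E -> E k k <= 1.
Proof.
move=> Eh E2; have Ekk : E k k = \sum_l `|E k l| ^+ 2.
  by rewrite -{1}E2 -{2}Eh gram_diag.
have E0 : 0 <= E k k by rewrite Ekk sumr_ge0 // => l _; rewrite exprn_ge0.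
have [->|ez] := eqVneq (E k k) 0; first by rewrite ler01.
have ep : 0 < E k k by rewrite lt_def ez E0.
rewrite -(ler_pM2l ep) mulr1 -expr2 {2}Ekk (bigD1 k) //= ger0_norm //.
by rewrite lerDl sumr_ge0 // => l _; rewrite exprn_ge0.
Qed.

(* If Om Om^* is a diagonal 0/1 matrix, the zero rows of Om are exactly
   those with a 0 on the diagonal, so the diagonal acts trivially on Om. *)
Lemma partial_isometry_rows n (Om : 'M[C]_n) (p : 'I_n -> bool) :
  Om *m Om ^t* = diag_mx (\row_i (p i)%:R) -> diag_mx (\row_i (p i)%:R) *m Om = Om.
Proof.
move=> OO; apply/matrixP => i j; rewrite mul_diag_mx !mxE.
case pi: (p i); first by rewrite mul1r.
have := gram_diag Om i; rewrite OO !mxE eqxx pi mulr1n => /esym/eqP.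
rewrite psumr_eq0 => [/allP/(_ j (mem_index_enum _))|k _]; last exact: exprn_ge0.
by rewrite expf_eq0 normr_eq0 /= => /eqP ->; rewrite mulr0.
Qed.

(* If Om is a partial isometry (Om Om^* a diagonal 0/1 matrix) and G is
   unitary, then R = Om^* G has rows and columns of norm at most 1: its
   column norms are those of the rows of G kept by Om, and its row norms are
   the diagonal of the projector Om^* Om. *)
Lemma partial_isometry_norms n (Om G : 'M[C]_n) (p : 'I_n -> bool) :
  G \is unitarymx -> Om *m Om ^t* = diag_mx (\row_i (p i)%:R) ->
  (forall k, \sum_j `|(Om ^t* *m G) k j| ^+ 2 <= 1) /\
  (forall j, \sum_k `|(Om ^t* *m G) k j| ^+ 2 <= 1).
Proof.
move=> Gu OO; split => [k|j].
  rewrite -gram_diag adjmxM trmxCK -mulmxA [G *m _]mulmxA (unitarymxP Gu) mul1mx.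
  apply: projector_diag_le1; first by rewrite adjmxM trmxCK.
  by rewrite -mulmxA [Om *m _]mulmxA OO partial_isometry_rows.
rewrite -adj_gram_diag adjmxM trmxCK -mulmxA [Om *m _]mulmxA OO.
apply: (@le_trans _ _ (\sum_i `|G i j| ^+ 2)); last by rewrite unitary_col_norm.
rewrite mxE; apply: ler_sum => i _; rewrite mul_diag_mx !mxE normCK.
by case: (p i); rewrite ?mul1r ?mul0r ?mulr0 ?scale1r ?scale0r ?mul_conjC_ge0 // mulrC lexx.
Qed.

End SingularValues.

Section Fidelity.
Variable C : numClosedFieldType.

Lemma half_sum_le1 (x y : C) : x <= 1 -> y <= 1 -> (x + y) / 2%:R <= 1.
Proof.
move=> hx hy; rewrite ler_pdivrMr ?ltr0n // mul1r.
by apply: le_trans (lerD hx hy) _; rewrite -(natrD C 1 1).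
Qed.

(* With Om = diag(1/s) L (a partial isometry) and R = Om^* G one has
   sum s = tr(L Om^* ) = sum_jk a_j b_k Z_jk R_kj, and
   |Z_jk R_kj| <= W_jk = (|Z_jk|^2 + |R_kj|^2) / 2. *)
Lemma singular_sum_le n (G Z : 'M[C]_n) (a b s : 'rV[C]_n) :
  G \is unitarymx -> Z \is unitarymx ->
  (forall i, 0 <= a 0 i) -> (forall i, 0 <= b 0 i) ->
  orthogonal_rows (G *m diag_mx a *m Z *m diag_mx b) s ->
  exists W : 'I_n -> 'I_n -> C,
    [/\ forall j k, 0 <= W j k, forall j, \sum_k W j k <= 1,
        forall k, \sum_j W j k <= 1 &
        \sum_i s 0 i <= \sum_j \sum_k a 0 j * b 0 k * W j k].
Proof.
move=> Gu Zu a0 b0 [s0 LL].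
set L := G *m diag_mx a *m Z *m diag_mx b in LL *.
set D := diag_mx (\row_i (s 0 i)^-1).
have Dh : D ^t* = D by rewrite adj_diag_mx // nneg_realmx // => i; rewrite mxE invr_ge0.
have LD : L *m (D *m L) ^t* = diag_mx (\row_i (s 0 i * s 0 i / s 0 i)).
  rewrite adjmxM Dh mulmxA LL diag_mxM; congr diag_mx.
  by apply/rowP => i; rewrite !mxE.
have OO : D *m L *m (D *m L) ^t* = diag_mx (\row_i (s 0 i != 0)%:R).
  rewrite -mulmxA LD diag_mxM; congr diag_mx; apply/rowP => i; rewrite !mxE.
  by have [->|nz] := eqVneq (s 0 i) 0; rewrite ?invr0 ?mul0r ?mulfK ?mulVf.
have [Rr Rc] := partial_isometry_norms Gu OO.
set R := (D *m L) ^t* *m G in Rr Rc.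
pose W j k := (`|Z j k| ^+ 2 + `|R k j| ^+ 2) / 2%:R.
exists W; split.
- by move=> j k; rewrite divr_ge0 ?ler0n // addr_ge0 ?exprn_ge0.
- by move=> j; rewrite -mulr_suml big_split half_sum_le1 ?unitary_row_norm.
- by move=> k; rewrite -mulr_suml big_split half_sum_le1 ?unitary_col_norm.
have -> : \sum_i s 0 i = `|\tr (L *m (D *m L) ^t*)|.
  rewrite LD mxtrace_diag ger0_norm; last first.
    by apply: sumr_ge0 => i _; rewrite mxE divr_ge0 ?mulr_ge0.
  apply: eq_bigr => i _; rewrite mxE.
  by have [->|nz] := eqVneq (s 0 i) 0; rewrite ?mul0r // mulfK.
rewrite /L trace_diag_sandwich; apply: le_trans (ler_norm_sum _ _ _) _.
apply: ler_sum => j _; apply: le_trans (ler_norm_sum _ _ _) _.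
apply: ler_sum => k _; rewrite normrM ger0_norm ?mulr_ge0 //.
apply: ler_wpM2l; first exact: mulr_ge0.
rewrite /W ler_pdivlMr ?ltr0n // normrM.
have := amgm (normr_ge0 (Z j k)) (normr_ge0 (R k j)) ler01.
by rewrite mul1r expr1n mul1r mulrC.
Qed.

Lemma gram_orthogonal_rows n (K P : 'M[C]_n) (t : 'rV[C]_n) :
  spectral_decomp (K *m K ^t*) P t -> orthogonal_rows (P *m K) (sqrt_row t).
Proof.
move=> [Pu t0 KK]; split => [i|]; first exact: sqrt_row_ge0.
rewrite adjmxM -mulmxA [K *m _]mulmxA KK !mulmxA (unitarymxP Pu) mul1mx.
rewrite -mulmxA (unitarymxP Pu) mulmx1; congr diag_mx; apply/rowP => i.
by rewrite !mxE -expr2 sqrtCK.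
Qed.

(* Reduction of the fidelity to singular values: with rho = X^* diag(lam) X
   and sigma = Y^* diag(mu) Y, the fidelity of rho and U sigma U^* is the sum
   of the singular values s of G diag(sqrt lam) Z diag(sqrt mu) for some
   unitaries G, Z (namely G = P X^*, Z = X (Y U^* )^* ). *)
Lemma fidelity_orthogonal_rows n (rho sigma U X Y : 'M[C]_n) (lam mu : 'rV[C]_n) :
  spectral_decomp rho X lam -> spectral_decomp sigma Y mu -> U \is unitarymx ->
  exists (G Z : 'M[C]_n) (s : 'rV[C]_n),
   [/\ G \is unitarymx, Z \is unitarymx,
       fidelity rho (U *m sigma *m U ^t*) = \sum_i s 0 i &
       orthogonal_rows (G *m diag_mx (sqrt_row lam) *m Z *m diag_mx (sqrt_row mu)) s].
Proof.
move=> sr ss Uu; have [Xu lam0 _] := sr; have [Yu mu0 sE] := ss.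
set b := sqrt_row mu; set Y' := Y *m U ^t*.
have Y'u : Y' \is unitarymx by rewrite mul_unitarymx ?trmxC_unitary.
set K := msqrt rho *m Y' ^t* *m diag_mx b.
have bb : diag_mx b *m (diag_mx b) ^t* = diag_mx mu.
  rewrite adj_diag_mx ?nneg_realmx // => [|i]; last exact: sqrt_row_ge0.
  by rewrite diag_mxM; congr diag_mx; apply/rowP => i; rewrite !mxE -expr2 sqrtCK.
have MK : msqrt rho *m (U *m sigma *m U ^t*) *m msqrt rho = K *m K ^t*.
  rewrite sE /K !adjmxM trmxCK (spectral_adj (msqrt_decomp sr)) !mulmxA.
  by congr (_ *m _); rewrite -!mulmxA [diag_mx b *m _]mulmxA bb trmxCK.
have [P [t sM]] := psd_spectral (psd_gram K); have [Pu _ _] := sM.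
exists (P *m X ^t*), (X *m Y' ^t*), (sqrt_row t); split.
- by rewrite mul_unitarymx ?trmxC_unitary.
- by rewrite mul_unitarymx ?trmxC_unitary.
- by rewrite /fidelity MK (spectral_trace (msqrt_decomp sM)).
have -> : P *m X ^t* *m diag_mx (sqrt_row lam) *m (X *m Y' ^t*) *m diag_mx b =
    P *m K by rewrite /K (msqrt_spectral sr) !mulmxA.
exact: gram_orthogonal_rows.
Qed.

(* The fidelity is sum_i sqrt(lam_i nu_i) when rho and U sigma U^* are
   diagonal in a common basis with eigenvalues lam and nu: take U = X^* Y. *)
Lemma fidelity_aligned n (rho sigma X Y : 'M[C]_n) (lam nu : 'rV[C]_n) :
  spectral_decomp rho X lam -> spectral_decomp sigma Y nu ->
  exists2 U : 'M[C]_n, U \is unitarymx &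
    fidelity rho (U *m sigma *m U ^t*) = \sum_i sqrtC (lam 0 i * nu 0 i).
Proof.
move=> sr ss; have [Xu lam0 _] := sr; have [Yu nu0 sE] := ss.
exists (X ^t* *m Y); first by rewrite mul_unitarymx ?trmxC_unitary.
have s' : (X ^t* *m Y) *m sigma *m (X ^t* *m Y) ^t* = X ^t* *m diag_mx nu *m X.
  rewrite sE adjmxM trmxCK !mulmxA -[X ^t* *m Y *m Y ^t*]mulmxA (unitarymxP Yu).
  by rewrite mulmx1 -[X ^t* *m diag_mx nu *m Y *m Y ^t*]mulmxA (unitarymxP Yu) mulmx1.
set c := \row_i (sqrtC (lam 0 i) * nu 0 i * sqrtC (lam 0 i)).
have sM : spectral_decomp (msqrt rho *m (X ^t* *m diag_mx nu *m X) *m msqrt rho) X c.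
  split => // [i|]; first by rewrite mxE !mulr_ge0 ?sqrtC_ge0.
  rewrite (msqrt_spectral sr) !mulmxA.
  rewrite -[X ^t* *m _ *m X *m X ^t*]mulmxA (unitarymxP Xu) mulmx1.
  rewrite -[X ^t* *m _ *m _ *m X *m X ^t*]mulmxA (unitarymxP Xu) mulmx1.
  rewrite -!mulmxA; congr (_ *m _); rewrite !mulmxA !diag_mxM; congr (_ *m _).
  by congr diag_mx; apply/rowP => i; rewrite !mxE.
rewrite /fidelity s' (spectral_trace (msqrt_decomp sM)); apply: eq_bigr => i _.
by rewrite !mxE; congr sqrtC; rewrite mulrC mulrA -expr2 sqrtCK mulrC.
Qed.

End Fidelity.

Section SortedBounds.
Variable C : numClosedFieldType.

Lemma rowseq_antitone n (s : 'rV[C]_n) : (forall i, 0 <= s 0 i) ->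
  nonincreasing s -> forall k, (rowseq s)`_k.+1 <= (rowseq s)`_k.
Proof.
move=> s0 sdec k; have [h1|h1] := ltnP k.+1 n.
  have h2 := ltnW h1; rewrite -[k]/(val (Ordinal h2)) -[k.+1]/(val (Ordinal h1)).
  by rewrite !rowseq_nth; apply: sdec.
rewrite [X in X <= _]nth_default ?size_rowseq //.
have [h2|h2] := ltnP k n; last by rewrite nth_default ?size_rowseq.
by rewrite -[k]/(val (Ordinal h2)) rowseq_nth.
Qed.

Lemma rowseq_end n (s : 'rV[C]_n) : (rowseq s)`_n = 0.
Proof. by rewrite nth_default ?size_rowseq. Qed.

Lemma sqrt_row_nonincreasing n (s : 'rV[C]_n) : (forall i, 0 <= s 0 i) ->
  nonincreasing s -> nonincreasing (sqrt_row s).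
Proof. by move=> s0 sdec i j ij; rewrite !mxE ler_sqrtC ?sdec // nnegrE. Qed.

Lemma sqrt_rowM n (s t : 'rV[C]_n) i j : 0 <= s 0 i -> 0 <= t 0 j ->
  sqrt_row s 0 i * sqrt_row t 0 j = sqrtC (s 0 i * t 0 j).
Proof. by move=> s0 t0; rewrite !mxE sqrtCM ?nnegrE. Qed.

Lemma fidelity_le_sorted n (rho sigma U X Y : 'M[C]_n) (lam mu : 'rV[C]_n) :
  sorted_spectral rho X lam -> sorted_spectral sigma Y mu -> U \is unitarymx ->
  fidelity rho (U *m sigma *m U ^t*) <= \sum_i sqrtC (lam 0 i * mu 0 i).
Proof.
move=> [sr ldec] [ss mdec] Uu; have [_ lam0 _] := sr; have [_ mu0 _] := ss.
set a := sqrt_row lam; set b := sqrt_row mu.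
have [G [Z [s [Gu Zu -> Ls]]]] := fidelity_orthogonal_rows sr ss Uu.
have [W [W0 Wr Wc le_sW]] :=
  singular_sum_le Gu Zu (fun i => sqrt_row_ge0 (lam0 i)) (fun i => sqrt_row_ge0 (mu0 i)) Ls.
apply: le_trans le_sW _.
move: (substochastic_pairing_le
  (rowseq_antitone (fun i => sqrt_row_ge0 (lam0 i)) (sqrt_row_nonincreasing lam0 ldec))
  (rowseq_antitone (fun i => sqrt_row_ge0 (mu0 i)) (sqrt_row_nonincreasing mu0 mdec))
  (rowseq_end a) (rowseq_end b) W0 Wr Wc).
under eq_bigr do under eq_bigr do rewrite !rowseq_nth.
under [X in _ <= X -> _]eq_bigr do rewrite !rowseq_nth.
by rewrite -(eq_bigr _ (fun i _ => sqrt_rowM (lam0 i) (mu0 i))).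
Qed.

(* Lower bound: it is at least the classical fidelity of the spectrum of rho
   sorted decreasingly against the spectrum of sigma sorted increasingly,
   since |Z_jk|^2 is doubly stochastic for unitary Z. *)
Lemma fidelity_ge_sorted n (rho sigma U X Y : 'M[C]_n) (lam mu : 'rV[C]_n) :
  sorted_spectral rho X lam -> sorted_spectral sigma Y mu -> U \is unitarymx ->
  \sum_i sqrtC (lam 0 i * mu 0 (rev_ord i)) <= fidelity rho (U *m sigma *m U ^t*).
Proof.
move=> [sr ldec] [ss mdec] Uu; have [_ lam0 _] := sr; have [_ mu0 _] := ss.
set a := sqrt_row lam; set b := sqrt_row mu.
have [G [Z [s [Gu Zu -> Ls]]]] := fidelity_orthogonal_rows sr ss Uu.
have a0 i : 0 <= a 0 i := sqrt_row_ge0 (lam0 i).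
have b0 i : 0 <= b 0 i := sqrt_row_ge0 (mu0 i).
apply: le_trans (singular_sum_ge Gu Zu a0 b0 Ls).
move: (stochastic_pairing_ge (W := fun j k => `|Z j k| ^+ 2)
  (rowseq_antitone a0 (sqrt_row_nonincreasing lam0 ldec))
  (rowseq_antitone b0 (sqrt_row_nonincreasing mu0 mdec))
  (rowseq_end a) (rowseq_end b) (fun j k => exprn_ge0 _ (normr_ge0 _))
  (fun j => unitary_row_norm j Zu) (fun k => unitary_col_norm k Zu)).
under eq_bigr => i _ do rewrite rowseq_nth (rowseq_nth b (rev_ord i)).
under [X in _ <= X -> _]eq_bigr do under eq_bigr do rewrite !rowseq_nth.
by rewrite -(eq_bigr _ (fun i _ => sqrt_rowM (lam0 i) (mu0 (rev_ord i)))).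
Qed.

Lemma cfidelity_rowseq n (s t : 'rV[C]_n) :
  cfidelity (rowseq s) (rowseq t) = \sum_i sqrtC (s 0 i * t 0 i).
Proof. by rewrite /cfidelity size_rowseq; apply: eq_bigr => i _; rewrite !rowseq_nth. Qed.

Lemma cfidelity_rowseq_rev n (s t : 'rV[C]_n) :
  cfidelity (rowseq s) (rev (rowseq t)) = \sum_i sqrtC (s 0 i * t 0 (rev_ord i)).
Proof.
rewrite /cfidelity size_rowseq; apply: eq_bigr => i _.
by rewrite nth_rev ?size_rowseq // rowseq_nth (rowseq_nth t (rev_ord i)).
Qed.

Definition rev_perm n : 'S_n := perm (@rev_ord_inj n).

End SortedBounds.

Theorem theorem1 (C : numClosedFieldType) (d : nat) (hd : (1 <= d)%N)
    (rho sigma : 'M[C]_d) :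
  density rho -> density sigma ->
  ((forall U : 'M[C]_d, U \is unitarymx ->
      fidelity rho (U *m sigma *m U ^t*) <= cfidelity (eig_dec rho) (eig_dec sigma))
   /\ (exists2 U : 'M[C]_d, U \is unitarymx &
      fidelity rho (U *m sigma *m U ^t*) = cfidelity (eig_dec rho) (eig_dec sigma))
   /\ cfidelity (eig_dec rho) (eig_dec sigma)
        = \sum_(j < d) sqrtC ((eig_dec rho)`_j * (eig_dec sigma)`_j))
  /\
  ((forall U : 'M[C]_d, U \is unitarymx ->
      cfidelity (eig_dec rho) (eig_inc sigma) <= fidelity rho (U *m sigma *m U ^t*))
   /\ (exists2 U : 'M[C]_d, U \is unitarymx &
      fidelity rho (U *m sigma *m U ^t*) = cfidelity (eig_dec rho) (eig_inc sigma))
   /\ cfidelity (eig_dec rho) (eig_inc sigma)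
        = \sum_(j < d) sqrtC ((eig_dec rho)`_j * (eig_inc sigma)`_j)).
Proof.
move=> [rho_psd _] [sigma_psd _].
have [X [lam sr]] := psd_sorted_spectral rho_psd.
have [Y [mu ss]] := psd_sorted_spectral sigma_psd.
rewrite /eig_inc (eig_dec_sorted_spectral sr) (eig_dec_sorted_spectral ss).
split; (split; [|split]; last by rewrite /cfidelity size_rowseq).
- by move=> U Uu; rewrite cfidelity_rowseq; apply: fidelity_le_sorted sr ss Uu.
- by rewrite cfidelity_rowseq; apply: fidelity_aligned sr.1 ss.1.
- by move=> U Uu; rewrite cfidelity_rowseq_rev; apply: fidelity_ge_sorted sr ss Uu.
have [U Uu fidU] := fidelity_aligned sr.1 (spectral_perm (rev_perm d) ss.1).
exists U; rewrite // fidU cfidelity_rowseq_rev.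
by apply: eq_bigr => i _; rewrite mxE permE.
Qed.
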